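(* Let $K$ be a field containing $\mathbb{Q}$ such that every element of $K$ is algebraic over $\mathbb{Q}$. Then $\widetilde{K}=\{x\in K: \sigma(x)=x \text{ for every field automorphism } \sigma \text{ of } K\}$.
   Context: Let $K$ be a field. For $r\in K$, a finite set $A(r)$ with $\{r\}\subseteq A(r)\subseteq K$ is called adequate for $r$ if every mapping $f:A(r)\to K$ satisfying (1) if $1\in A(r)$ then $f(1)=1$; (2) if $a,b\in A(r)$ and $a+b\in A(r)$ then $f(a+b)=f(a)+f(b)$; (3) if $a,b\in A(r)$ and $a\cdot b\in A(r)$ then $f(a\cdot b)=f(a)\cdot f(b)$, also satisfies $f(r)=r$. $\widetilde{K}$ denotes the set of all $r\in K$ for which some finite set adequate for $r$ exists. *)

From HB Require Import structures.
From mathcomp Require Import all_boot all_order all_algebra.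
Set Implicit Arguments. Unset Strict Implicit. Unset Printing Implicit Defensive.
Import Order.TTheory GRing.Theory Num.Theory.
Local Open Scope ring_scope.

(* A finite set A ⊆ K is represented by a finite list (duplicates irrelevant).
   A mapping f : A -> K is represented by a total function K -> K whose
   values outside A are irrelevant (every map on A extends to K). *)
Definition adequate (K : fieldType) (r : K) (A : seq K) : Prop :=
  r \in A /\
  forall f : K -> K,
    ((1 : K) \in A -> f 1 = 1) ->
    (forall a b, a \in A -> b \in A -> a + b \in A -> f (a + b) = f a + f b) ->
    (forall a b, a \in A -> b \in A -> a * b \in A -> f (a * b) = f a * f b) ->
    f r = r.

Definition Ktilde (K : fieldType) (r : K) : Prop :=
  exists A : seq K, adequate r A.

Definition algebraic_over_Q (K : fieldType) (x : K) : Prop :=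
  exists2 p : {poly rat}, p != 0 & root (map_poly (@ratr K) p) x.

From HB Require Import structures.
From mathcomp Require Import all_boot all_order all_algebra.
From Stdlib Require Import Classical ClassicalEpsilon.
Set Implicit Arguments. Unset Strict Implicit. Unset Printing Implicit Defensive.
Import Order.TTheory GRing.Theory Num.Theory.

(* Ring automorphisms respect every finite set of relations, so they fix K~.
   Conversely, if x is not in K~, every finite A containing x carries a map f,
   additive and multiplicative within A, with f x <> x.  Choose A so large that
   it contains, for each of the first n elements a_i of an enumeration of K, the
   arithmetic evaluating a rational polynomial p_i with p_i(a_i) = 0: then f a_i
   lies among the finitely many roots of p_i.  König's lemma extracts from these
   maps a pointwise limit, which is a ring endomorphism sigma with sigma x <> x.
   As sigma permutes the finitely many roots of each p_i, it is onto, hence an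
   automorphism moving x. *)

Definition infinitely_often (P : nat -> Prop) := forall m, exists2 n, m <= n & P n.

Lemma infinitely_often_pigeonhole (T : eqType) (P : nat -> Prop) (h : nat -> T) (R : seq T) :
  infinitely_often (fun n => P n /\ h n \in R) ->
  exists y, infinitely_often (fun n => P n /\ h n = y).
Proof.
elim: R => [|y R IHR] inf; first by have [n _ []] := inf 0.
have [|] := classic (infinitely_often (fun n => P n /\ h n = y)); first by exists y.
move=> /not_all_ex_not[m0 not_y]; apply: IHR => m.
have [n le_mn [Pn]] := inf (maxn m m0); rewrite inE => /predU1P[hn_y|hn_R].
  by case: not_y; exists n; rewrite // (leq_trans (leq_maxr _ _) le_mn).
by exists n; rewrite // (leq_trans (leq_maxl _ _) le_mn).
Qed.

Section Konig.
Variables (T : eqType) (R : nat -> seq T) (F : nat -> nat -> T).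
Hypothesis F_in : forall i n, i <= n -> F n i \in R i.

Let x0 := F 0 0.

Let agrees_often (h : seq T) :=
  infinitely_often (fun n => forall i, i < size h -> F n i = nth x0 h i).

Lemma agrees_often_rcons h : agrees_often h -> exists y, agrees_often (rcons h y).
Proof.
move=> agr_h.
pose agrees_on n := forall i, i < size h -> F n i = nth x0 h i.
have [|y agr_y] := @infinitely_often_pigeonhole _ agrees_on (F^~ (size h)) (R (size h)).
  move=> m; have [n le_n agr] := agr_h (maxn m (size h)).
  by exists n; rewrite ?(leq_trans (leq_maxl _ _) le_n) ?F_in ?(leq_trans (leq_maxr _ _) le_n).
exists y => m; have [n le_mn [agr Fn]] := agr_y m; exists n => // i.
rewrite size_rcons ltnS nth_rcons leq_eqVlt => /predU1P[->|lt_i]; last by rewrite lt_i agr.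
by rewrite ltnn eqxx.
Qed.

Lemma konig : exists g : nat -> T,
  forall N, exists2 n, N <= n & forall i, i <= N -> F n i = g i.
Proof.
have [ext extP] : exists ext : seq T -> T,
    forall h, agrees_often h -> agrees_often (rcons h (ext h)).
  apply: (choice (fun h y => agrees_often h -> agrees_often (rcons h y))) => h.
  have [/agrees_often_rcons[y]|] := classic (agrees_often h); first by exists y.
  by exists x0.
pose prefix N := iter N (fun h => rcons h (ext h)) [::].
have size_prefix N : size (prefix N) = N by elim: N => //= N IHN; rewrite size_rcons IHN.
have agr_prefix N : agrees_often (prefix N).
  by elim: N => [m|N IHN]; [exists m | exact: extP].
have nth_prefix i N : i < N -> nth x0 (prefix N) i = nth x0 (prefix i.+1) i.
  elim: N => // N IHN; rewrite ltnS leq_eqVlt => /predU1P[->//|lt_iN].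
  by rewrite /= nth_rcons size_prefix lt_iN IHN.
exists (fun i => nth x0 (prefix i.+1) i) => N.
have [n le_Nn agr] := agr_prefix N.+1 N.
by exists n => // i le_iN; rewrite agr ?size_prefix ?nth_prefix.
Qed.

End Konig.

Local Open Scope ring_scope.

Definition pmorph_on (K : fieldType) (A : seq K) (f : K -> K) :=
  [/\ 1 \in A -> f 1 = 1,
      forall a b, a \in A -> b \in A -> a + b \in A -> f (a + b) = f a + f b &
      forall a b, a \in A -> b \in A -> a * b \in A -> f (a * b) = f a * f b].

Section PartialMorphism.
Variables (K : fieldType) (A : seq K) (f : K -> K).
Hypothesis f_pmorph : pmorph_on A f.

Lemma pmorph_on_sub (B : seq K) : {subset B <= A} -> pmorph_on B f.
Proof.
case: f_pmorph => f1 fD fM sBA.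
by split=> [/sBA //|a b *|a b *]; [apply: fD | apply: fM]; apply: sBA.
Qed.

Lemma pmorph_on0 : 0 \in A -> f 0 = 0.
Proof.
case: f_pmorph => _ fD _ A0.
by apply: (@addrI _ (f 0)); rewrite -fD ?addr0.
Qed.

Lemma pmorph_onN a : 0 \in A -> a \in A -> - a \in A -> f (- a) = - f a.
Proof.
case: f_pmorph => _ fD _ A0 Aa ANa.
by apply/eqP; rewrite -subr_eq0 opprK -fD ?addNr ?pmorph_on0.
Qed.

Lemma pmorph_onV a : 0 \in A -> 1 \in A -> a \in A -> a^-1 \in A -> f a^-1 = (f a)^-1.
Proof.
case: f_pmorph => f1 _ fM A0 A1 Aa AVa.
have [->|a_neq0] := eqVneq a 0; first by rewrite invr0 pmorph_on0 ?invr0.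
have fVa_fa : f a^-1 * f a = 1 by rewrite -fM ?mulVf ?f1.
have fa_neq0 : f a != 0 by apply: contra_eq_neq fVa_fa => ->; rewrite mulr0 eq_sym oner_neq0.
by apply: (mulIf fa_neq0); rewrite fVa_fa mulVf.
Qed.

End PartialMorphism.

(* Rational polynomials are encoded as terms over 0, 1, +, *, -, ^-1, so that a
   map that is a partial morphism on the values of all subterms commutes with
   their evaluation. *)
Inductive term := T0 | T1 | TVar | TAdd of term & term | TMul of term & term
  | TOpp of term | TInv of term.

Section Terms.
Variable K : fieldType.

Fixpoint eval (v : K) (t : term) : K :=
  match t with
  | T0 => 0 | T1 => 1 | TVar => v
  | TAdd t1 t2 => eval v t1 + eval v t2 | TMul t1 t2 => eval v t1 * eval v t2
  | TOpp t1 => - eval v t1 | TInv t1 => (eval v t1)^-1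
  end.

Fixpoint subterm_values (v : K) (t : term) : seq K :=
  eval v t :: match t with
  | TAdd t1 t2 | TMul t1 t2 => subterm_values v t1 ++ subterm_values v t2
  | TOpp t1 | TInv t1 => subterm_values v t1
  | _ => [::]
  end.

Lemma eval_subterm_values v t : eval v t \in subterm_values v t.
Proof. by case: t => *; rewrite inE eqxx. Qed.

Lemma pmorph_on_eval (A : seq K) f v t : pmorph_on A f -> 0 \in A -> 1 \in A ->
  {subset subterm_values v t <= A} -> f (eval v t) = eval (f v) t.
Proof.
move=> f_pmorph A0 A1; have [f1 fD fM] := f_pmorph.
have Aeval t' : {subset subterm_values v t' <= A} -> eval v t' \in A.
  by move=> sub; apply/sub/eval_subterm_values.
elim: t => [||| t1 IH1 t2 IH2 | t1 IH1 t2 IH2 | t1 IH1 | t1 IH1] /= sub.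
- exact: pmorph_on0 f_pmorph A0.
- exact: f1.
- by [].
- have [sub1 sub2] : {subset subterm_values v t1 <= A} /\ {subset subterm_values v t2 <= A}.
    by split=> y y_in; apply: sub; rewrite inE mem_cat y_in ?orbT.
  by rewrite fD ?IH1 ?IH2 ?Aeval //; apply: sub; rewrite mem_head.
- have [sub1 sub2] : {subset subterm_values v t1 <= A} /\ {subset subterm_values v t2 <= A}.
    by split=> y y_in; apply: sub; rewrite inE mem_cat y_in ?orbT.
  by rewrite fM ?IH1 ?IH2 ?Aeval //; apply: sub; rewrite mem_head.
- have sub1 : {subset subterm_values v t1 <= A} by move=> y y_in; rewrite sub // inE y_in orbT.
  by rewrite (pmorph_onN f_pmorph) ?IH1 ?Aeval //; apply: sub; rewrite mem_head.
- have sub1 : {subset subterm_values v t1 <= A} by move=> y y_in; rewrite sub // inE y_in orbT.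
  by rewrite (pmorph_onV f_pmorph) ?IH1 ?Aeval //; apply: sub; rewrite mem_head.
Qed.

Definition nat_term n := iter n (TAdd^~ T1) T0.
Definition int_term (z : int) :=
  match z with Posz n => nat_term n | Negz n => TOpp (nat_term n.+1) end.
Definition rat_term (q : rat) := TMul (int_term (numq q)) (TInv (int_term (denq q))).
Fixpoint horner_term (s : seq rat) :=
  if s is c :: s' then TAdd (TMul (horner_term s') TVar) (rat_term c) else T0.
Definition poly_term (p : {poly rat}) := horner_term p.

Lemma eval_nat_term v n : eval v (nat_term n) = n%:R.
Proof. by elim: n => //= n ->; rewrite mulrSr. Qed.

Lemma eval_int_term v z : eval v (int_term z) = z%:~R.
Proof. by case: z => n; rewrite [LHS]/= ?eval_nat_term // NegzE mulrNz -mulrSr. Qed.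

Lemma eval_poly_term v p : eval v (poly_term p) = (map_poly (@ratr K) p).[v].
Proof.
rewrite map_polyE horner_Poly /poly_term.
by elim: (polyseq p) => //= c s ->; rewrite !eval_int_term.
Qed.

Definition root_witness (a : K) (p : {poly rat}) := [:: 0, 1 & subterm_values a (poly_term p)].

Lemma pmorph_on_root (A : seq K) f a p : pmorph_on A f -> {subset root_witness a p <= A} ->
  root (map_poly (@ratr K) p) a -> root (map_poly (@ratr K) p) (f a).
Proof.
move=> f_pmorph sub /eqP pa0; apply/eqP.
have [A0 A1] : 0 \in A /\ 1 \in A by split; apply: sub; rewrite !inE eqxx ?orbT.
rewrite -eval_poly_term -(pmorph_on_eval f_pmorph) ?eval_poly_term ?pa0 ?(pmorph_on0 f_pmorph) //.
by move=> y y_in; apply: sub; rewrite !inE y_in !orbT.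
Qed.

End Terms.

Lemma rmorph_fixes_Ktilde (K : fieldType) (sigma : {rmorphism K -> K}) x :
  Ktilde x -> sigma x = x.
Proof. by case=> A [_ adqA]; apply: adqA => *; rewrite ?rmorph1 ?rmorphD ?rmorphM. Qed.

Lemma not_Ktilde_pmorph (K : fieldType) (x : K) A :
  ~ Ktilde x -> x \in A -> exists2 f, pmorph_on A f & f x != x.
Proof.
move=> notKx xA; apply: NNPP => no_f; apply: notKx; exists A; split=> // f f1 fD fM.
by apply/eqP/contraT => fx_neq_x; case: no_f; exists f; first split.
Qed.

Lemma rmorph_of_local_pmorph (K : fieldType) (s : K -> K) :
  (forall L, exists2 f, pmorph_on L f & {in L, f =1 s}) ->
  exists sigma : {rmorphism K -> K}, sigma =1 s.
Proof.
move=> local.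
have s1 : s 1 = 1.
  by have [f [f1 _ _] <-] := local [:: 1]; rewrite ?f1 ?mem_head.
have sD : {morph s : a b / a + b}.
  move=> a b; have [f [_ fD _] fs] := local [:: a; b; a + b].
  by rewrite -!fs ?fD // !inE eqxx ?orbT.
have sM : {morph s : a b / a * b}.
  move=> a b; have [f [_ _ fM] fs] := local [:: a; b; a * b].
  by rewrite -!fs ?fM // !inE eqxx ?orbT.
have s0 : s 0 = 0 by apply: (@addrI _ (s 0)); rewrite -sD !addr0.
pose sA := GRing.isNmodMorphism.Build _ _ s (s0, sD).
pose sMon := GRing.isMonoidMorphism.Build _ _ s (s1, sM).
pose sigma : {rmorphism K -> K} := HB.pack s sA sMon.
by exists sigma.
Qed.

Lemma poly_roots_finite (R : idomainType) (p : {poly R}) :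
  p != 0 -> exists s : seq R, forall a, root p a -> a \in s.
Proof.
elim: {p}(size p) {-2}p (leqnn (size p)) => [|n IHn] p.
  by rewrite leqn0 size_poly_eq0 => /eqP->; rewrite eqxx.
move=> size_p p_neq0; have [[a pa0]|no_root] := classic (exists a, root p a); last first.
  by exists [::] => a pa0; case: no_root; exists a.
have [q def_p] := factor_theorem _ _ pa0.
have q_neq0 : q != 0 by apply: contraNneq p_neq0; rewrite def_p => ->; rewrite mul0r.
have size_q : (size q <= n)%N.
  by rewrite -ltnS (leq_trans _ size_p) // def_p size_Mmonic ?monicXsubC // size_XsubC addn2.
have [s roots_q] := IHn q size_q q_neq0.
by exists (a :: s) => b; rewrite def_p rootM root_XsubC inE => /orP[/roots_q->|->]; rewrite ?orbT.
Qed.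

Section AlgebraicChar0.
Variable K : fieldType.
Hypothesis charK0 : [pchar K] =i pred0.

Lemma char0_intr_eq0 (z : int) : (z%:~R == 0 :> K) = (z == 0).
Proof.
by case: z => n; rewrite ?NegzE ?mulrNz ?oppr_eq0 /= ((pcharf0P K).1 charK0).
Qed.

Lemma char0_ratr_eq0 (q : rat) : (ratr q == 0 :> K) = (q == 0).
Proof. by rewrite /ratr mulf_eq0 invr_eq0 !char0_intr_eq0 denq_eq0 orbF numq_eq0. Qed.

Lemma map_ratr_poly_eq0 (p : {poly rat}) : (map_poly (@ratr K) p == 0) = (p == 0).
Proof.
have [->|p_neq0] := eqVneq p 0; first by rewrite map_poly0 eqxx.
by rewrite map_poly_eq0_id0 ?char0_ratr_eq0 ?lead_coef_eq0 // (negPf p_neq0).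
Qed.

Lemma ratr_poly_roots_finite (p : {poly rat}) : exists s : seq K,
  p != 0 -> forall a, root (map_poly (@ratr K) p) a -> a \in s.
Proof.
have [p_eq0|p_neq0] := eqVneq p 0; first by exists [::]; rewrite p_eq0.
by have [|s] := @poly_roots_finite K (map_poly ratr p); rewrite ?map_ratr_poly_eq0 //; exists s.
Qed.

Hypothesis algK : forall x : K, algebraic_over_Q x.

Lemma algebraic_enum : exists e : nat -> K, forall a, exists n, e n = a.
Proof.
have [roots rootsP] := choice _ ratr_poly_roots_finite.
exists (fun n => if @unpickle ({poly rat} * nat)%type n is Some (p, i) then nth 0 (roots p) i else 0).
move=> a; have [p p_neq0 pa0] := algK a.
by exists (pickle (p, index a (roots p))); rewrite pickleK nth_index ?rootsP.
Qed.

Lemma rmorph_surj (sigma : {rmorphism K -> K}) b : exists a, sigma a = b.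
Proof.
have [p p_neq0 pb0] := algK b; set P := map_poly (@ratr K) p.
have [s roots_s] := ratr_poly_roots_finite p.
have sigma_P : map_poly sigma P = P.
  by rewrite -map_poly_comp; apply: eq_map_poly => c /=; rewrite fmorph_rat.
have sigma_root y : root P y -> root P (sigma y).
  by move=> /eqP Py0; apply/eqP; rewrite -{1}sigma_P horner_map Py0 rmorph0.
set l := [seq y <- undup s | root P y].
have sub : {subset map sigma l <= l}.
  move=> z /mapP[y]; rewrite !mem_filter mem_undup => /andP[Py _] ->.
  by rewrite sigma_root ?mem_undup ?roots_s ?sigma_root.
have uniq_sigma_l : uniq (map sigma l).
  by rewrite map_inj_uniq ?filter_uniq ?undup_uniq //; apply: fmorph_inj.
have [_ eq_l] := uniq_min_size uniq_sigma_l sub (eq_leq (esym (size_map sigma l))).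
have : b \in l by rewrite mem_filter pb0 mem_undup roots_s.
by rewrite -eq_l => /mapP[a _ ->]; exists a.
Qed.

Lemma rmorph_bij (sigma : {rmorphism K -> K}) : bijective sigma.
Proof.
have [g gK] := choice _ (rmorph_surj sigma).
by exists g => // a; apply: (fmorph_inj sigma); rewrite gK.
Qed.

Lemma nonfixed_rmorph_of_not_Ktilde x :
  ~ Ktilde x -> exists sigma : {rmorphism K -> K}, sigma x != x.
Proof.
move=> notKx; have [e e_surj] := algebraic_enum.
have [idx idxK] := choice _ e_surj.
have [p p_root] : exists p : K -> {poly rat},
    forall a, p a != 0 /\ root (map_poly ratr (p a)) a.
  apply: (choice (fun a q => q != 0 /\ root (map_poly ratr q) a)) => a.
  by have [q] := algK a; exists q.
have [roots rootsP] := choice _ ratr_poly_roots_finite.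
pose W i := e i :: root_witness (e i) (p (e i)).
pose B n := x :: flatten [seq W i | i <- iota 0 n.+1].
have W_B i n : (i <= n)%N -> {subset W i <= B n}.
  move=> le_in y y_in; rewrite inE; apply/orP; right; apply/flattenP.
  by exists (W i); rewrite // map_f // mem_iota ltnS le_in.
have [f fP] : exists f : nat -> K -> K, forall n, pmorph_on (B n) (f n) /\ f n x != x.
  apply: (choice (fun n g => pmorph_on (B n) g /\ g x != x)) => n.
  by have [g] := @not_Ktilde_pmorph _ x (B n) notKx (mem_head _ _); exists g.
have f_root i n : (i <= n)%N -> f n (e i) \in roots (p (e i)).
  move=> le_in; have [p_neq0 root_p] := p_root (e i); apply: rootsP p_neq0 _ _.
  by apply: pmorph_on_root (fP n).1 _ root_p => y y_in; apply: W_B le_in _ _; rewrite inE y_in orbT.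
have [g g_lim] := @konig _ (fun i => roots (p (e i))) (fun n i => f n (e i)) f_root.
pose s a := g (idx a).
have local (L : seq K) : exists2 n, {subset L <= B n} & {in L, f n =1 s}.
  have [n le_n agree] := g_lim (\max_(a <- L) idx a).
  have le_idx a : a \in L -> (idx a <= \max_(a <- L) idx a)%N by move=> aL; apply: leq_bigmax_seq.
  exists n => a aL; last by rewrite -{1}(idxK a) agree ?le_idx.
  by rewrite -(idxK a); apply: W_B (leq_trans (le_idx a aL) le_n) _ (mem_head _ _).
have [sigma sigma_s] : exists sigma : {rmorphism K -> K}, sigma =1 s.
  apply: rmorph_of_local_pmorph => L; have [n LB fs] := local L.
  by exists (f n); first exact: (pmorph_on_sub (fP n).1 LB).
have [n _ fs] := local [:: x].
by exists sigma; rewrite sigma_s -fs ?mem_head ?(fP n).2.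
Qed.

End AlgebraicChar0.

Theorem theorem3 (K : fieldType)
  (charK0 : [pchar K] =i pred0)
  (algK : forall x : K, algebraic_over_Q x) :
  forall x : K,
    Ktilde x <-> (forall sigma : {rmorphism K -> K}, bijective sigma -> sigma x = x).
Proof.
move=> x; split=> [Kx sigma _ | fixed]; first exact: rmorph_fixes_Ktilde.
apply: NNPP => notKx; have [sigma /eqP] := nonfixed_rmorph_of_not_Ktilde charK0 algK notKx.
by apply; apply/fixed/rmorph_bij.
Qed.
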